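(* For $n\ge 1$ let $a(n) = n - \lfloor \sqrt{n-1} \rfloor$. Then for every $n\ge 1$, $$\sum_{i=1}^n a(i) = \big|\{(x,y)\in \mathbb{Z}_{>0}\times\mathbb{Z}_{>0} : y \le x \le y^2 \text{ and } x\le n\}\big|.$$
   Context: $\mathbb{Z}_{>0}$ denotes the set of positive integers. (This $a(n)$ is the case $m=2$ of the sequence $n-h(n)$ where each $k\ge0$ appears $2k+1$ times in $h$, $h(1)=0$.) *)

From mathcomp Require Import all_boot.
From Stdlib Require Import PeanoNat.

Definition a (n : nat) : nat := n - Nat.sqrt (n - 1).

(* The set {(x,y) in Z>0 x Z>0 : y <= x <= y^2, x <= n}, encoded inside
   'I_n.+1 * 'I_n.+1 (all such x,y satisfy y <= x <= n). *)
Definition pairset (n : nat) : {set 'I_n.+1 * 'I_n.+1} :=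
  [set p : 'I_n.+1 * 'I_n.+1 |
     [&& 0 < p.1, 0 < p.2, p.2 <= p.1, p.1 <= p.2 ^ 2 & p.1 <= n]].

(* Count the pairs column by column.  For 0 < x, the condition x <= y^2 is
   x - 1 < y^2, i.e. floor(sqrt(x - 1)) < y, so the admissible y in column x
   form the interval (floor(sqrt(x - 1)), x], which has a(x) elements. *)

From mathcomp Require Import all_boot.
From Stdlib Require Import PeanoNat Lia.
From mathcomp Require Import zify.

Lemma ltn_sqrt (m y : nat) : (Nat.sqrt m < y) = (m < y ^ 2).
Proof.
rewrite Nat.pow_2_r; apply/ltP/ltP => /Nat.sqrt_lt_square //.
Qed.

Lemma sum_ord_between (m k N : nat) :
  \sum_(y < N) ((m < y) && (y <= k)) = minn N k.+1 - m.+1.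
Proof.
elim: N => [|N IHN]; first by rewrite big_ord0.
rewrite big_ord_recr /= IHN.
by case: (leqP N k) => HNk; case: (ltnP m N) => HmN /=; lia.
Qed.

Lemma pairset_column (n : nat) (x : 'I_n.+1) :
  \sum_(y < n.+1) ((x, y) \in pairset n) = a x.
Proof.
case: x => /= x x_lt_n; have x_le_n : x <= n := x_lt_n.
have [x0 | x_gt0] := posnP x.
  by rewrite big1 => [|y _]; rewrite ?inE /= x0.
have pairsetE (y : 'I_n.+1) :
    ((Ordinal x_lt_n, y) \in pairset n) = (Nat.sqrt x.-1 < y) && (y <= x).
  have sqr_geE : (x <= y ^ 2) = (Nat.sqrt x.-1 < y) by rewrite ltn_sqrt prednK.
  rewrite inE /= x_gt0 x_le_n {}sqr_geE andbT.
  by case: y => -[|y] ? //=; rewrite andbC.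
under eq_bigr => y _ do rewrite pairsetE.
by rewrite sum_ord_between /a (minn_idPr x_lt_n) subn1 subSS.
Qed.

Lemma card_pairset (n : nat) :
  #|pairset n| = \sum_(x < n.+1) \sum_(y < n.+1) ((x, y) \in pairset n).
Proof.
rewrite pair_big /= -sum1_card big_mkcond /=.
by apply: eq_bigr => -[x y].
Qed.

Theorem mainTheorem4 (n : nat) : 1 <= n ->
  \sum_(1 <= i < n.+1) a i = #|pairset n|.
Proof.
move=> _.
transitivity (\sum_(x < n.+1) a x).
  by rewrite -(big_mkord xpredT a) [RHS]big_ltn // {2}/a sub0n.
by rewrite card_pairset; apply: eq_bigr => x _; rewrite pairset_column.
Qed.
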